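(* For each positive integer $k$ and each $n\in\mathbb{Z}$, $$f(n-k, x, q^k s) = \frac{1}{v(k)} \big(f(k-1, x, qs) f(n, x, s) - f(k, x, s) f(n-1, x, qs)\big),\qquad v(k) = (-1)^k q^{\binom{k}{2}} s^{k-1}.$$
   Context: Let $x,s,q$ be indeterminates; all quantities live in the field of rational functions in $x,s,q$. The Carlitz $q$-Fibonacci polynomials $f(n,x,s)$ are defined by $f(0,x,s)=0$, $f(1,x,s)=1$ and $f(n, x, s) = x f(n-1, x, s) + q^{n-2} s f(n-2, x, s)$; this recurrence is required to hold for all $n\in\mathbb{Z}$, which uniquely extends $f(n,x,s)$ to negative $n$. Here $f(n,x,q^a s)$ means $f(n,x,s)$ with $s$ replaced by $q^a s$. *)

From HB Require Import structures.
From mathcomp Require Import all_boot all_order all_algebra.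
Set Implicit Arguments. Unset Strict Implicit. Unset Printing Implicit Defensive.
Import Order.TTheory GRing.Theory Num.Theory.
Local Open Scope ring_scope.

(* The field Q(x, s, q) of rational functions in three indeterminates,
   built as the fraction field of Q[q][s][x]. *)
Definition Kxsq : fieldType := {fraction {poly {poly {poly rat}}}}.

Definition xx : Kxsq := tofrac ('X : {poly {poly {poly rat}}}).
Definition ss : Kxsq := tofrac (('X : {poly {poly rat}})%:P : {poly {poly {poly rat}}}).
Definition qq : Kxsq := tofrac ((('X : {poly rat})%:P)%:P : {poly {poly {poly rat}}}).

Section CarlitzFib.
Variables (F : fieldType) (x s q : F).

(* fnat n = (f n, f (n+1)) for n >= 0, via f(n+2) = x f(n+1) + q^n s f(n). *)
Fixpoint fnat (n : nat) : F * F :=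
  match n with
  | 0%N => (0, 1)
  | m.+1 => let: (a, b) := fnat m in (b, x * b + q ^+ m * s * a)
  end.

(* fneg m = (f(-m), f(-m+1)) for m >= 0, via the recurrence at index -m+1:
   f(-m+1) = x f(-m) + q^(-m-1) s f(-m-1), i.e. exponent (-m+1)-2. *)
Fixpoint fneg (m : nat) : F * F :=
  match m with
  | 0%N => (0, 1)
  | m'.+1 => let: (a, b) := fneg m' in
             ((b - x * a) / (q ^ (- (m'%:Z) - 1) * s), a)
  end.

Definition cfib (n : int) : F :=
  match n with
  | Posz k => (fnat k).1
  | Negz k => (fneg k.+1).1
  end.

End CarlitzFib.

Definition f (n : int) (x s : Kxsq) : Kxsq := cfib x s qq n.

From HB Require Import structures.
From mathcomp Require Import all_boot all_order all_algebra.
From mathcomp Require Import ring zify.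
Set Implicit Arguments. Unset Strict Implicit. Unset Printing Implicit Defensive.
Import Order.TTheory GRing.Theory Num.Theory.
Local Open Scope ring_scope.

(* As functions of n, both sides solve the recurrence
   u(n+2) = x u(n+1) + q^n s u(n): the left side because shifting n by k turns
   the coefficient q^(n-k) (q^k s) into q^n s, the right side as a combination of
   f(n, x, s) and f(n-1, x, qs).  Since q^n s never vanishes, the recurrence can
   be run backwards, so a solution is determined by two consecutive values.
   At n = k the left side is f(0) = 0 and the right side cancels; at n = k+1
   the left side is f(1) = 1 and the right side is 1 by the Casoratian identity
   f(k-1, qs) f(k+1, s) - f(k, s) f(k, qs) = v(k). *)

Definition linear_rec2 (F : fieldType) (a c u : int -> F) :=
  forall n : int, u (n + 2) = a n * u (n + 1) + c n * u n.

Lemma linear_rec2_uniq (F : fieldType) (a c u w : int -> F) (m : int) :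
  (forall n, c n != 0) -> linear_rec2 a c u -> linear_rec2 a c w ->
  u m = w m -> u (m + 1) = w (m + 1) -> u =1 w.
Proof.
move=> c_neq0 hu hw e0 e1.
have up (j : nat) :
    u (m + j%:Z) = w (m + j%:Z) /\ u (m + j%:Z + 1) = w (m + j%:Z + 1).
  elim: j => [|j [ej ej1]]; first by rewrite addr0.
  have -> : m + j.+1%:Z = m + j%:Z + 1 by lia.
  have -> : m + j%:Z + 1 + 1 = m + j%:Z + 2 by lia.
  by rewrite hu hw ej ej1.
have down (j : nat) :
    u (m - j%:Z) = w (m - j%:Z) /\ u (m - j%:Z + 1) = w (m - j%:Z + 1).
  elim: j => [|j [ej ej1]]; first by rewrite subr0.
  have ej' : m - j.+1%:Z + 1 = m - j%:Z by lia.
  rewrite ej'; split=> //.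
  have e2 : m - j.+1%:Z + 2 = m - j%:Z + 1 by lia.
  have hu' := hu (m - j.+1%:Z); have hw' := hw (m - j.+1%:Z).
  rewrite e2 ej' in hu' hw'; rewrite ej1 hw' ej in hu'.
  by apply/esym/(mulfI (c_neq0 (m - j.+1%:Z)))/(addrI _ hu').
move=> n; have -> : n = m + (n - m) by lia.
by case: (n - m) => j; [case: (up j) | rewrite NegzE; case: (down j.+1)].
Qed.

Section CarlitzRecurrence.
Variables (F : fieldType) (x q : F).

Definition carlitz_rec (s : F) := linear_rec2 (fun=> x) (fun n => q ^ n * s).

Lemma cfib_nat_rec s m :
  cfib x s q m.+2 = x * cfib x s q m.+1 + q ^+ m * s * cfib x s q m.
Proof. by rewrite /cfib /=; case: (fnat x s q m). Qed.

Lemma cfib_neg s m :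
  cfib x s q (- m%:Z) = (fneg x s q m).1 /\
  cfib x s q (- m%:Z + 1) = (fneg x s q m).2.
Proof.
case: m => [|m] //; split=> //.
have -> : - m.+1%:Z + 1 = - m%:Z by lia.
by case: m => [|m] //=; case: (fneg x s q m).
Qed.

Lemma cfib_casoratian s (j : nat) :
  cfib x (q * s) q j * cfib x s q j.+2 - cfib x s q j.+1 * cfib x (q * s) q j.+1
  = (-1) ^+ j.+1 * q ^+ 'C(j.+1, 2) * s ^+ j.
Proof.
elim: j => [|j IH]; first by rewrite /=; ring.
rewrite (cfib_nat_rec s j.+1) (cfib_nat_rec (q * s) j).
transitivity (- (q ^+ j.+1 * s) *
  (cfib x (q * s) q j * cfib x s q j.+2 - cfib x s q j.+1 * cfib x (q * s) q j.+1)).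
  by rewrite exprS; ring.
by rewrite IH (binS j.+1 1) bin1 exprD !exprS; ring.
Qed.

Hypothesis q_neq0 : q != 0.

Lemma cfib_rec (s : F) : s != 0 -> carlitz_rec s (cfib x s q).
Proof.
move=> s_neq0 [m|m]; first by rewrite -!PoszD addn2 addn1 cfib_nat_rec.
rewrite NegzE.
have -> : - m.+1%:Z + 2 = - m%:Z + 1 by lia.
have -> : - m.+1%:Z + 1 = - m%:Z by lia.
have [-> ->] := cfib_neg s m; have [-> _] := cfib_neg s m.+1.
have -> : - m.+1%:Z = - m%:Z - 1 by lia.
rewrite /=; case: (fneg x s q m) => a b /=.
by rewrite [_ * (_ / _)]mulrC divfK ?mulf_neq0 ?expfz_neq0 //; ring.
Qed.

Lemma carlitz_rec_shift s k u :
  carlitz_rec (q ^+ k * s) u -> carlitz_rec s (fun n => u (n - k%:Z)).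
Proof.
move=> hu n /=.
have shift (d : int) : n + d - k%:Z = n - k%:Z + d by lia.
by rewrite !shift hu mulrA -[q ^+ k]/(q ^ k%:Z) -expfzDr // subrK.
Qed.

Lemma carlitz_rec_comb s a b c u w :
  carlitz_rec s u -> carlitz_rec s w ->
  carlitz_rec s (fun n => (a * u n - b * w n) * c).
Proof. by move=> hu hw n /=; rewrite hu hw; ring. Qed.

End CarlitzRecurrence.

Lemma qq_neq0 : qq != 0.
Proof. by rewrite /qq tofrac_eq0 !polyC_eq0 polyX_eq0. Qed.

Lemma ss_neq0 : ss != 0.
Proof. by rewrite /ss tofrac_eq0 !polyC_eq0 polyX_eq0. Qed.

Theorem corollary2 (k : nat) (n : int) : (0 < k)%N ->
  f (n - k%:Z) xx (qq ^+ k * ss) =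
  (f (k%:Z - 1) xx (qq * ss) * f n xx ss - f k%:Z xx ss * f (n - 1) xx (qq * ss))
  / ((-1) ^+ k * qq ^+ 'C(k, 2) * ss ^+ k.-1).
Proof.
case: k => [//|j] _; rewrite /f succnK.
set v := (-1) ^+ j.+1 * qq ^+ 'C(j.+1, 2) * ss ^+ j.
(* Side conditions are discharged by explicit terms: closing them with [//]
   would try to decide equalities in the fraction field by evaluation. *)
have m1_neq0 : (-1 : Kxsq) != 0 by rewrite oppr_eq0 oner_eq0.
have v_neq0 : v != 0 := mulf_neq0 (mulf_neq0 (expf_neq0 _ m1_neq0)
  (expf_neq0 _ qq_neq0)) (expf_neq0 _ ss_neq0).
have qs_neq0 : qq * ss != 0 := mulf_neq0 qq_neq0 ss_neq0.
move: n; apply: (linear_rec2_uniq (a := fun=> xx) (c := fun n => qq ^ n * ss)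
  (m := j.+1%:Z)).
- by move=> m; apply: mulf_neq0 (expfz_neq0 _ qq_neq0) ss_neq0.
- exact (carlitz_rec_shift qq_neq0
    (cfib_rec xx qq_neq0 (mulf_neq0 (expf_neq0 j.+1 qq_neq0) ss_neq0))).
- have shifted_qs : carlitz_rec xx qq (qq ^+ 1 * ss) (cfib xx (qq * ss) qq) :=
    cfib_rec xx qq_neq0 qs_neq0.
  exact (carlitz_rec_comb _ _ _ (cfib_rec xx qq_neq0 ss_neq0)
    (carlitz_rec_shift qq_neq0 shifted_qs)).
- by rewrite [j.+1%:Z - _]subrr [_ * cfib xx ss qq j.+1]mulrC subrr mul0r.
- have -> : j.+1%:Z + 1 - j.+1%:Z = 1 by lia.
  have -> : j.+1%:Z - 1 = j%:Z by lia.
  have -> : j.+1%:Z + 1 - 1 = j.+1%:Z by lia.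
  have -> : j.+1%:Z + 1 = j.+2%:Z by lia.
  by rewrite cfib_casoratian -/v (mulfV v_neq0).
Qed.
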